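(* Let $\mathcal{C}=(V,\mathcal{R})$ be a coherent configuration and let $X,Y$ be fibers of $\mathcal{C}$ such that $|X|=|Y|$ is a prime. Then $|\mathcal{R}_{X,Y}|\in\{1,|\mathcal{R}_X|\}$. Furthermore, if $|\mathcal{R}_{X,Y}|>1$, then $|\mathcal{R}_{X,Y}|=|\mathcal{R}_X|=|\mathcal{R}_Y|$.
   Context: A coherent configuration is a pair $\mathcal{C}=(V,\mathcal{R})$ where $V$ is a finite set and $\mathcal{R}$ is a partition of $V\times V$ into nonempty sets such that: (1) the diagonal $\Delta_V$ is a union of members of $\mathcal{R}$; (2) for each $R\in\mathcal{R}$ its transpose $R^t=\{(u,v)\mid (v,u)\in R\}$ belongs to $\mathcal{R}$; (3) for all $R,S,T\in\mathcal{R}$ there is a constant $c_{RS}^T$ with $c_{RS}^T=|R(u)\cap S^t(v)|$ for all $(u,v)\in T$, where $T(w)=\{z\in V\mid (w,z)\in T\}$. A subset $X\subseteq V$ is a fiber if $\Delta_X=\{(x,x)\mid x\in X\}\in\mathcal{R}$. For fibers $X,Y$, $\mathcal{R}_{X,Y}=\{R\in\mathcal{R}\mid R\subseteq X\times Y\}$ and $\mathcal{R}_X=\mathcal{R}_{X,X}$. *)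

From mathcomp Require Import all_boot.
Set Implicit Arguments. Unset Strict Implicit. Unset Printing Implicit Defensive.

Definition diagonal (V : finType) (X : {set V}) : {set V * V} :=
  [set (x, x) | x in X].

Definition transpose (V : finType) (R : {set V * V}) : {set V * V} :=
  [set p | (p.2, p.1) \in R].

Definition nbhd (V : finType) (T : {set V * V}) (w : V) : {set V} :=
  [set z | (w, z) \in T].

Definition coherent_configuration (V : finType) (Rel : {set {set V * V}}) : Prop :=
  [/\ partition Rel [set: V * V],
      (exists2 D : {set {set V * V}}, D \subset Rel & cover D = diagonal [set: V]),
      (forall R, R \in Rel -> transpose R \in Rel) &
      (forall R S T, R \in Rel -> S \in Rel -> T \in Rel ->
         exists c : nat, forall u v, (u, v) \in T ->
           #|nbhd R u :&: nbhd (transpose S) v| = c)].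

Definition is_fiber (V : finType) (Rel : {set {set V * V}}) (X : {set V}) : Prop :=
  diagonal X \in Rel.

Definition rels_between (V : finType) (Rel : {set {set V * V}}) (X Y : {set V})
  : {set {set V * V}} :=
  [set R in Rel | R \subset setX X Y].

From HB Require Import structures.
From mathcomp Require Import all_boot all_algebra.
Set Implicit Arguments. Unset Strict Implicit. Unset Printing Implicit Defensive.
Import GRing.Theory.

(* Work over a field F of characteristic p = |X|, with the matrices of the adjacency
   algebra supported on Z x W forming a space A_{Z,W} with |F|^|R_{Z,W}| elements.
   If R <> R' lie in R_{X,Y}, the valencies k of R and k' of R^t lie strictly between 0
   and p, and the Gram matrix of N = A_R is N N^t = kk' I_X + b with b in A_{X,X} and
   b 1 = 0.  Such a b is nilpotent: an idempotent power e of b has trace |X| e_xx = 0,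
   which is rank e in F, so rank e is 0 or p; in the latter case e = I_X, contradicting
   e 1 = 0.  Thus N N^t is invertible on A_{X,X}, so a |-> a N embeds A_{X,X} into
   A_{X,Y} and a |-> N^t a embeds A_{X,Y} into A_{Y,Y}.  Doing the same with R^t gives
   the reverse chain of embeddings. *)

Local Open Scope ring_scope.

Lemma expr_idempotent (R : pzSemiRingType) (x : R) (s : seq R) :
  (forall m, x ^+ m \in s) -> exists2 m, (0 < m)%N & x ^+ m * x ^+ m = x ^+ m.
Proof.
move=> xs; pose t := [seq x ^+ k | k <- iota 0 (size s).+1].
have /(uniqPn 0) [i [j [lt_ij lt_j eq_ij]]] : ~~ uniq t.
  apply/negP => /uniq_leq_size le_ts.
  have : (size t <= size s)%N by apply: le_ts => _ /mapP [k _ ->].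
  by rewrite size_map size_iota ltnn.
rewrite size_map size_iota in lt_j; have lt_i := ltn_trans lt_ij lt_j.
rewrite !(nth_map 0) ?size_iota // !nth_iota // !add0n in eq_ij.
have period a : (i <= a)%N -> x ^+ (a + (j - i)) = x ^+ a.
  by move/subnKC <-; rewrite addnAC subnKC ?(ltnW lt_ij) // !exprD eq_ij.
have periods c a : (i <= a)%N -> x ^+ (a + c * (j - i)) = x ^+ a.
  elim: c a => [|c IHc] a le_ia; first by rewrite addn0.
  by rewrite mulSn addnA IHc ?period // (leq_trans le_ia) ?leq_addr.
exists ((j - i) * i.+1)%N; first by rewrite muln_gt0 subn_gt0 lt_ij.
rewrite -exprD {2}mulnC periods //.
by apply: leq_trans (leqnSn i) _; rewrite leq_pmull // subn_gt0.
Qed.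

Lemma mxtrace_pid_mx (F : pzRingType) n r : (r <= n)%N -> \tr (pid_mx r : 'M[F]_n) = r%:R.
Proof. by move/subnKC <-; rewrite pid_mx_block mxtrace_block mxtrace1 mxtrace0 addr0. Qed.

Lemma mxtrace_idem (F : fieldType) n (e : 'M[F]_n) : e *m e = e -> \tr e = (\rank e)%:R.
Proof.
move=> idem_e; set L := col_ebase e; set U := row_ebase e.
set P := pid_mx (\rank e) : 'M[F]_n.
have unitL : L \in unitmx := col_ebase_unit e.
have unitU : U \in unitmx := row_ebase_unit e.
have De : e = L *m P *m U by rewrite mulmx_ebase.
have PULP : P *m (U *m L) *m P = P.
  apply: (can_inj (mulKmx unitL)); apply: (can_inj (mulmxK unitU)) => /=.
  by rewrite -De -idem_e {1 2}De !mulmxA.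
have PP : P *m P = P by rewrite pid_mx_id ?rank_leq_row.
rewrite {1}De mxtrace_mulC mulmxA -PP mulmxA mxtrace_mulC mulmxA PULP.
by rewrite /P mxtrace_pid_mx ?rank_leq_row.
Qed.

Lemma leq_card_in_map (T T' : finType) (A : {pred T}) (B : {pred T'}) (f : T -> T') :
  {in A, forall a, f a \in B} -> {in A &, injective f} -> (#|A| <= #|B|)%N.
Proof.
move=> fAB /card_in_imset <-; apply: subset_leq_card.
by apply/subsetP => _ /imsetP [a Aa ->]; exact: fAB.
Qed.

Lemma scale_add_nilpotent_eq0l (F : fieldType) n (D b a : 'M[F]_n) (s : F) m :
  s != 0 -> b ^+ m = 0 -> a *m D = a -> a *m (s *: D + b) = 0 -> a = 0.
Proof.
move=> s_neq0 bm0 aD a0.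
have ab : a *m b = - s *: a.
  by apply/eqP; rewrite scaleNr -addr_eq0 -{2}aD scalemxAr -mulmxDr addrC a0.
have abk k : a *m b ^+ k = (- s) ^+ k *: a.
  elim: k => [|k IHk]; first by rewrite expr0 mulmx1 scale1r.
  by rewrite exprSr -mulmxE mulmxA IHk -scalemxAl ab scalerA -exprSr.
apply/eqP; move: (abk m); rewrite bm0 mulmx0 => /esym/eqP.
by rewrite scaler_eq0 expf_eq0 oppr_eq0 (negbTE s_neq0) andbF.
Qed.

Lemma scale_add_nilpotent_eq0r (F : fieldType) n (D b a : 'M[F]_n) (s : F) m :
  s != 0 -> b ^+ m = 0 -> D *m a = a -> (s *: D + b) *m a = 0 -> a = 0.
Proof.
move=> s_neq0 bm0 Da a0.
have ba : b *m a = - s *: a.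
  by apply/eqP; rewrite scaleNr -addr_eq0 -{2}Da scalemxAl -mulmxDl addrC a0.
have bka k : b ^+ k *m a = (- s) ^+ k *: a.
  elim: k => [|k IHk]; first by rewrite expr0 mul1mx scale1r.
  by rewrite exprS -mulmxE -mulmxA IHk -scalemxAr ba scalerA -exprSr.
apply/eqP; move: (bka m); rewrite bm0 mul0mx => /esym/eqP.
by rewrite scaler_eq0 expf_eq0 oppr_eq0 (negbTE s_neq0) andbF.
Qed.

Lemma transposeK (V : finType) : involutive (@transpose V).
Proof. by move=> R; apply/setP => -[a b]; rewrite !inE. Qed.

Lemma transpose_inj (V : finType) : injective (@transpose V).
Proof. exact: can_inj (@transposeK V). Qed.

Lemma in_diagonal (V : finType) (Z : {set V}) a b :
  ((a, b) \in diagonal Z) = (a == b) && (a \in Z).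
Proof. by apply/imsetP/andP => [[x Zx [-> ->]] | [/eqP -> Zb]]; last exists b. Qed.

Lemma nbhd_diagonal (V : finType) (Z : {set V}) u :
  nbhd (diagonal Z) u = if u \in Z then [set u] else set0.
Proof.
apply/setP => w; rewrite !inE in_diagonal.
by case: (u \in Z); rewrite ?inE ?andbT ?andbF // eq_sym.
Qed.

Section CoherentConfiguration.

Variables (V : finType) (Rel : {set {set V * V}}).
Hypothesis ccRel : coherent_configuration Rel.

Lemma partition_rels : partition Rel [set: V * V].
Proof. by case: ccRel. Qed.

Lemma transpose_rel R : R \in Rel -> transpose R \in Rel.
Proof. by case: ccRel => _ _ + _; apply. Qed.

Lemma intersection_number R S T : R \in Rel -> S \in Rel -> T \in Rel ->
  exists c, forall u v, (u, v) \in T -> #|nbhd R u :&: nbhd (transpose S) v| = c.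
Proof. by case: ccRel => _ _ _; apply. Qed.

Lemma set0_notin_rels : set0 \notin Rel.
Proof. by case/and3P: partition_rels. Qed.

Lemma rel_neq0 R : R \in Rel -> exists z, z \in R.
Proof. by move=> RelR; apply/set0Pn; apply: contraNneq set0_notin_rels => <-. Qed.

Definition rel_of (z : V * V) : {set V * V} := pblock Rel z.

Lemma rel_of_rel z : rel_of z \in Rel.
Proof. by case/and3P: partition_rels => /eqP cover_Rel _ _; rewrite pblock_mem ?cover_Rel. Qed.

Lemma mem_rel_of z : z \in rel_of z.
Proof. by case/and3P: partition_rels => /eqP cover_Rel _ _; rewrite mem_pblock cover_Rel. Qed.

Lemma rel_ofE R z : R \in Rel -> z \in R -> rel_of z = R.
Proof. by case/and3P: partition_rels => _ trivRel _; apply: def_pblock. Qed.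

Lemma rel_of_eq R z : R \in Rel -> (z \in R) = (rel_of z == R).
Proof. by move=> RelR; apply/idP/eqP => [|<-]; [apply: rel_ofE | apply: mem_rel_of]. Qed.

Lemma fiber_fst_const Z T : is_fiber Rel Z -> T \in Rel ->
  {in T &, forall z z', (z.1 \in Z) = (z'.1 \in Z)}.
Proof.
move=> fibZ RelT [a b] [c d] /= Tab Tcd.
have [k Ck] := intersection_number fibZ RelT RelT.
have card_Z u w : (u, w) \in T -> #|nbhd (diagonal Z) u :&: nbhd (transpose T) w| = (u \in Z).
  move=> Tuw; rewrite nbhd_diagonal; case: (u \in Z); last by rewrite set0I cards0.
  by rewrite (setIidPl _) ?cards1 // sub1set !inE.
by move: (Ck _ _ Tcd); rewrite -(Ck _ _ Tab) !card_Z //; do 2 case: (_ \in Z).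
Qed.

Lemma fiber_snd_const Z T : is_fiber Rel Z -> T \in Rel ->
  {in T &, forall z z', (z.2 \in Z) = (z'.2 \in Z)}.
Proof.
move=> fibZ RelT [a b] [c d] Tab Tcd.
by apply: (fiber_fst_const fibZ (transpose_rel RelT) (x := (b, a)) (y := (d, c))); rewrite inE.
Qed.

Lemma rel_of_rels_between Z W a b : is_fiber Rel Z -> is_fiber Rel W ->
  (rel_of (a, b) \in rels_between Rel Z W) = (a \in Z) && (b \in W).
Proof.
move=> fibZ fibW; rewrite inE rel_of_rel /=.
apply/subsetP/andP => [sub_ab | [Za Wb] [c d] Rcd].
  by have /setXP := sub_ab _ (mem_rel_of (a, b)).
rewrite inE /= -(fiber_fst_const fibZ (rel_of_rel _) (mem_rel_of (a, b)) Rcd) Za.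
by rewrite -(fiber_snd_const fibW (rel_of_rel _) (mem_rel_of (a, b)) Rcd).
Qed.

Lemma transpose_rels_between Z W R :
  R \in rels_between Rel Z W -> transpose R \in rels_between Rel W Z.
Proof.
rewrite !inE => /andP [RelR subR]; rewrite transpose_rel //=.
by apply/subsetP => -[a b]; rewrite inE => /(subsetP subR) /setXP [Za Wb]; apply/setXP.
Qed.

Lemma valency_const R Z : R \in Rel -> is_fiber Rel Z ->
  {in Z &, forall u v, #|nbhd R u| = #|nbhd R v|}.
Proof.
move=> RelR fibZ u v Zu Zv.
have [c Cc] := intersection_number RelR (transpose_rel RelR) fibZ.
have valR w : w \in Z -> #|nbhd R w| = c.
  by move=> Zw; rewrite -(Cc w w) ?in_diagonal ?eqxx // transposeK setIid.
by rewrite !valR.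
Qed.

Lemma valency_bounds Z W R R' : is_fiber Rel Z ->
  R \in rels_between Rel Z W -> R' \in rels_between Rel Z W -> R != R' ->
  exists k, {in Z, forall x, #|nbhd R x| = k} /\ (0 < k < #|W|)%N.
Proof.
move=> fibZ; rewrite !inE => /andP [RelR subR] /andP [RelR' subR'] neqRR'.
have [[x y] Rxy] := rel_neq0 RelR; have [[x' y'] R'xy'] := rel_neq0 RelR'.
have /setXP [Zx Wy] := subsetP subR _ Rxy.
have /setXP [Zx' Wy'] := subsetP subR' _ R'xy'.
exists #|nbhd R x|; split=> [u Zu|]; first exact: (valency_const RelR fibZ Zu Zx).
rewrite card_gt0; apply/andP; split; first by apply/set0Pn; exists y; rewrite inE.
rewrite (valency_const RelR fibZ Zx Zx'); apply: proper_card; apply/properP; split.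
  by apply/subsetP => w; rewrite inE => /(subsetP subR) /setXP [].
exists y' => //; rewrite inE; apply: contra neqRR' => Rxy'.
by rewrite -(rel_ofE RelR Rxy') (rel_ofE RelR' R'xy').
Qed.

Local Notation n := #|V|.

Definition vtx (i : 'I_n) : V := enum_val i.

Lemma big_vtx (R : Type) (idx : R) (op : Monoid.com_law idx) (f : V -> R) :
  \big[op/idx]_(i < n) f (vtx i) = \big[op/idx]_v f v.
Proof. by rewrite -big_enum_val. Qed.

Lemma sum_vtx_mem (Z : {set V}) : (\sum_(i < n) (vtx i \in Z) = #|Z|)%N.
Proof.
rewrite (big_vtx _ (fun v => nat_of_bool (v \in Z))) -sum1_card [RHS]big_mkcond.
by apply: eq_bigr => v _; case: (v \in Z).
Qed.

Lemma vtx_inj : injective vtx.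
Proof. exact: enum_val_inj. Qed.

Lemma vtx_rank v : vtx (enum_rank v) = v.
Proof. exact: enum_rankK. Qed.

Section AdjacencyAlgebra.

Variable F : fieldType.
Local Notation ones := (const_mx 1 : 'cV[F]_n).

Definition adjmx (S : {set V * V}) : 'M[F]_n := \matrix_(i, j) ((vtx i, vtx j) \in S)%:R.

Definition idmx_on (Z : {set V}) : 'M[F]_n := diag_mx (\row_i (vtx i \in Z)%:R).

Definition rel_constant (M : 'M[F]_n) : bool :=
  [forall i, forall j, forall k, forall l,
     (rel_of (vtx i, vtx j) == rel_of (vtx k, vtx l)) ==> (M i j == M k l)].

Lemma rel_constantP (M : 'M[F]_n) :
  reflect (forall i j k l, rel_of (vtx i, vtx j) = rel_of (vtx k, vtx l) -> M i j = M k l)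
          (rel_constant M).
Proof.
apply: (iffP 'forall_'forall_'forall_'forall_implyP) => M_eq i j k l.
  by move/eqP/M_eq/eqP.
by move/eqP/M_eq => ->.
Qed.

Fact rel_constant_submod_closed : submod_closed rel_constant.
Proof.
split=> [|a M N /rel_constantP M_eq /rel_constantP N_eq]; apply/rel_constantP.
  by move=> i j k l _; rewrite !mxE.
by move=> i j k l eq_rel; rewrite !mxE (M_eq _ _ _ _ eq_rel) (N_eq _ _ _ _ eq_rel).
Qed.
HB.instance Definition _ := GRing.isSubmodClosed.Build F 'M[F]_n rel_constant
  rel_constant_submod_closed.

Lemma rel_constant_adjmx S : S \in Rel -> adjmx S \in rel_constant.
Proof.
by move=> RelS; apply/rel_constantP => i j k l eq_rel; rewrite !mxE !(rel_of_eq _ RelS) eq_rel.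
Qed.

Lemma rel_constant_sum_adjmx M : M \in rel_constant ->
  exists c : {set V * V} -> F, M = \sum_(S in Rel) c S *: adjmx S.
Proof.
move/rel_constantP => M_eq.
exists (fun S : {set V * V} =>
  if [pick z in S] is Some z then M (enum_rank z.1) (enum_rank z.2) else 0).
apply/matrixP => i j; rewrite summxE (bigD1 (rel_of (vtx i, vtx j))) ?rel_of_rel //=.
rewrite big1 => [|S /andP [RelS neqS]]; last first.
  by rewrite !mxE (rel_of_eq _ RelS) eq_sym (negbTE neqS) mulr0.
rewrite !mxE mem_rel_of mulr1 addr0.
case: pickP => [[a b] Sab | /(_ (vtx i, vtx j))]; last by rewrite mem_rel_of.
by apply: M_eq; rewrite /= !vtx_rank (rel_ofE (rel_of_rel _) Sab).
Qed.

Lemma adjmx_mul_entry S T i j :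
  (adjmx S *m adjmx T) i j = #|nbhd S (vtx i) :&: nbhd (transpose T) (vtx j)|%:R.
Proof.
rewrite !mxE (eq_bigr (fun k => (((vtx i, vtx k) \in S) && ((vtx k, vtx j) \in T))%:R)).
  rewrite (big_vtx _ (fun w => (((vtx i, w) \in S) && ((w, vtx j) \in T))%:R)).
  rewrite -sum1_card natr_sum [RHS]big_mkcond /=.
  by apply: eq_bigr => w _; rewrite !inE; case: (_ && _).
by move=> k _; rewrite !mxE -natrM mulnb.
Qed.

Lemma trmx_adjmx S : (adjmx S)^T = adjmx (transpose S).
Proof. by apply/matrixP => i j; rewrite !mxE inE. Qed.

Lemma rel_of_transpose a b : rel_of (b, a) = transpose (rel_of (a, b)).
Proof. by apply: rel_ofE; rewrite ?transpose_rel ?rel_of_rel // inE mem_rel_of. Qed.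

Lemma rel_constantM M N : M \in rel_constant -> N \in rel_constant -> M *m N \in rel_constant.
Proof.
move=> /rel_constant_sum_adjmx [c ->] /rel_constant_sum_adjmx [d ->].
rewrite mulmx_suml rpred_sum // => S RelS; rewrite -scalemxAl rpredZ //.
rewrite mulmx_sumr rpred_sum // => T RelT; rewrite -scalemxAr rpredZ //.
apply/rel_constantP => i j k l eq_rel; rewrite !adjmx_mul_entry.
have [c' Cc'] := intersection_number RelS RelT (rel_of_rel (vtx i, vtx j)).
by rewrite !Cc' ?mem_rel_of // eq_rel mem_rel_of.
Qed.

Lemma rel_constantT M : M \in rel_constant -> M^T \in rel_constant.
Proof.
move/rel_constantP => M_eq; apply/rel_constantP => i j k l eq_rel; rewrite !mxE.
by apply: M_eq; rewrite (rel_of_transpose (vtx i)) (rel_of_transpose (vtx k)) eq_rel.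
Qed.

Lemma idmx_onE Z : idmx_on Z = adjmx (diagonal Z).
Proof.
apply/matrixP => i j; rewrite !mxE in_diagonal (inj_eq vtx_inj).
by case: (i == j); rewrite ?mulr1n.
Qed.

Lemma idmx_on_mulmx_entry Z W M i j :
  (idmx_on Z *m M *m idmx_on W) i j = ((vtx i \in Z) && (vtx j \in W))%:R * M i j.
Proof. by rewrite mul_mx_diag mul_diag_mx !mxE mulrAC -natrM mulnb. Qed.

Lemma idmx_on_idem Z : idmx_on Z *m idmx_on Z = idmx_on Z.
Proof.
by rewrite mulmx_diag; congr diag_mx; apply/rowP => i; rewrite !mxE -natrM mulnb andbb.
Qed.

Lemma trmx_idmx_on Z : (idmx_on Z)^T = idmx_on Z.
Proof. exact: tr_diag_mx. Qed.

(* The span of the adjacency matrices of the relations in R_{Z,W}, when Z and W are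
   fibers (see [card_adj_space]). *)
Definition adj_space (Z W : {set V}) (M : 'M[F]_n) : bool :=
  (M \in rel_constant) && (idmx_on Z *m M *m idmx_on W == M).

Lemma adj_spaceE Z W M :
  (M \in adj_space Z W) = (M \in rel_constant) && (idmx_on Z *m M *m idmx_on W == M).
Proof. by []. Qed.

Fact adj_space_submod_closed Z W : submod_closed (adj_space Z W).
Proof.
split=> [|a M N]; rewrite !adj_spaceE; first by rewrite rpred0 mulmx0 mul0mx eqxx.
move=> /andP [cM /eqP DMD] /andP [cN /eqP DND]; rewrite rpredD ?rpredZ //=.
by rewrite mulmxDr mulmxDl -scalemxAr -scalemxAl DMD DND.
Qed.
HB.instance Definition _ Z W := GRing.isSubmodClosed.Build F 'M[F]_n (adj_space Z W)
  (adj_space_submod_closed Z W).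

Lemma adj_space_idl Z W A : A \in adj_space Z W -> idmx_on Z *m A = A.
Proof. by rewrite adj_spaceE => /andP [_ /eqP <-]; rewrite !mulmxA idmx_on_idem. Qed.

Lemma adj_space_idr Z W A : A \in adj_space Z W -> A *m idmx_on W = A.
Proof. by rewrite adj_spaceE => /andP [_ /eqP <-]; rewrite -!mulmxA idmx_on_idem. Qed.

Lemma adj_spaceM Z W U A B :
  A \in adj_space Z W -> B \in adj_space W U -> A *m B \in adj_space Z U.
Proof.
move=> AZW BWU; move: (AZW) (BWU); rewrite !adj_spaceE => /andP [cA _] /andP [cB _].
by rewrite rel_constantM //= mulmxA (adj_space_idl AZW) -mulmxA (adj_space_idr BWU).
Qed.

Lemma adj_spaceT Z W A : A \in adj_space Z W -> A^T \in adj_space W Z.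
Proof.
rewrite !adj_spaceE => /andP [cA /eqP DAD]; rewrite rel_constantT //=.
by rewrite -{2}DAD !trmx_mul !trmx_idmx_on mulmxA.
Qed.

Lemma adj_space_exp Z b m : b \in adj_space Z Z -> b ^+ m.+1 \in adj_space Z Z.
Proof. by move=> bZ; elim: m => [|m IHm]; rewrite ?expr1 // exprS (adj_spaceM bZ). Qed.

Lemma adjmx_adj_space Z W R : R \in rels_between Rel Z W -> adjmx R \in adj_space Z W.
Proof.
rewrite inE => /andP [RelR subR]; rewrite adj_spaceE rel_constant_adjmx //=.
apply/eqP/matrixP => i j; rewrite idmx_on_mulmx_entry mxE.
by case: (boolP (_ \in R)) => [/(subsetP subR) /setXP [-> ->] | _]; rewrite ?mulr0 ?mul1r.
Qed.

Lemma idmx_on_adj_space Z : is_fiber Rel Z -> idmx_on Z \in adj_space Z Z.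
Proof.
move=> fibZ; rewrite idmx_onE adjmx_adj_space // inE fibZ /=.
by apply/subsetP => _ /imsetP [x Zx ->]; apply/setXP.
Qed.

Lemma adjmx_ones S i : (adjmx S *m ones) i 0 = #|nbhd S (vtx i)|%:R.
Proof.
rewrite !mxE (eq_bigr (fun k => ((vtx i, vtx k) \in S)%:R)) => [|k _]; last first.
  by rewrite !mxE mulr1.
rewrite (big_vtx _ (fun w => ((vtx i, w) \in S)%:R)) -sum1_card natr_sum.
rewrite [RHS]big_mkcond /=.
by apply: eq_bigr => w _; rewrite inE; case: (_ \in S).
Qed.

Lemma idmx_on_ones Z i : (idmx_on Z *m ones) i 0 = (vtx i \in Z)%:R.
Proof. by rewrite mul_diag_mx !mxE mulr1. Qed.

Lemma adjmx_ones_valency Z W R k : R \in rels_between Rel Z W ->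
  {in Z, forall x, #|nbhd R x| = k} -> adjmx R *m ones = k%:R *: (idmx_on Z *m ones).
Proof.
rewrite inE => /andP [_ subR] valR; apply/matrixP => i j; rewrite ord1 adjmx_ones.
rewrite mxE idmx_on_ones.
case: (boolP (vtx i \in Z)) => [/valR -> | Zi]; first by rewrite mulr1.
rewrite mulr0 (_ : nbhd R (vtx i) = set0) ?cards0 //; apply/setP => w; rewrite !inE.
by apply: contraNF Zi => /(subsetP subR) /setXP [].
Qed.

Lemma mxtrace_adj_space Z A : is_fiber Rel Z -> #|Z|%:R = 0 :> F ->
  A \in adj_space Z Z -> \tr A = 0.
Proof.
move=> fibZ charZ AZ; have /andP [/rel_constantP A_eq /eqP DAD] := AZ.
rewrite -DAD /mxtrace (eq_bigr (fun i => (vtx i \in Z)%:R * A i i)) => [|i _]; last first.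
  by rewrite idmx_on_mulmx_entry andbb.
have [Z0 | [z Zz]] := set_0Vmem Z.
  by rewrite big1 // => i _; rewrite Z0 inE mul0r.
have A_diag i : vtx i \in Z -> A i i = A (enum_rank z) (enum_rank z).
  move=> Zi; apply: A_eq; rewrite vtx_rank.
  by rewrite !(rel_ofE fibZ (_ : (_, _) \in diagonal Z)) // in_diagonal eqxx.
rewrite (eq_bigr (fun i => (vtx i \in Z)%:R * A (enum_rank z) (enum_rank z))).
  by rewrite -mulr_suml -natr_sum sum_vtx_mem charZ mul0r.
by move=> i _; case: (boolP (vtx i \in Z)) => [/A_diag -> | _]; rewrite ?mul0r.
Qed.

Lemma mxrank_idmx_on Z : (\rank (idmx_on Z) <= #|Z|)%N.
Proof.
rewrite -sum_vtx_mem /idmx_on diag_mx_sum_delta.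
elim/big_rec2: _ => [|i r M _ le_Mr]; first by rewrite mxrank0.
rewrite (leq_trans (mxrank_add _ _)) // leq_add // mxE.
by case: (vtx i \in Z); rewrite ?scale1r ?mxrank_delta // scale0r mxrank0.
Qed.

Lemma mxrank_adj_space Z W A : A \in adj_space Z W -> (\rank A <= #|W|)%N.
Proof.
move/adj_space_idr <-.
exact: leq_trans (mxrankM_maxr _ _) (mxrank_idmx_on W).
Qed.

Lemma adj_space_idem_eq0 Z e : is_fiber Rel Z -> #|Z| \in [pchar F] ->
  e \in adj_space Z Z -> e *m e = e -> e *m ones = 0 -> e = 0.
Proof.
move=> fibZ charZ eZ idem_e e_ones.
have rank_dvd : (#|Z| %| \rank e)%N.
  by rewrite (dvdn_pcharf charZ) -mxtrace_idem // (mxtrace_adj_space fibZ (pcharf0 charZ)).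
have [/eqP | rank_e] := posnP (\rank e); first by rewrite mxrank_eq0 => /eqP.
have {rank_dvd} rank_e : \rank e = #|Z|.
  by apply/eqP; rewrite eqn_leq (mxrank_adj_space eZ) dvdn_leq.
(* [e] of full rank has the row space of [idmx_on Z], which does not kill [ones]. *)
have le_e : (e <= idmx_on Z)%MS by rewrite -(adj_space_idr eZ) submxMl.
have /submxP [Q DQe] : (idmx_on Z <= e)%MS.
  by rewrite -(mxrank_leqif_sup le_e).2 eqn_leq mxrankS //= rank_e mxrank_idmx_on.
have [z Zz] : exists z, z \in Z.
  by apply/set0Pn; rewrite -card_gt0 prime_gt0 ?(pcharf_prime charZ).
have := idmx_on_ones Z (enum_rank z).
by rewrite DQe -mulmxA e_ones mulmx0 mxE vtx_rank Zz => /eqP; rewrite eq_sym oner_eq0.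
Qed.

End AdjacencyAlgebra.

Section FiniteField.

Variable F : finFieldType.
Local Notation ones := (const_mx 1 : 'cV[F]_n).
Local Notation adjmx := (adjmx F).
Local Notation idmx_on := (idmx_on F).
Local Notation adj_space := (@adj_space F).

Lemma adj_space_entry_eq0 Z W M i j : is_fiber Rel Z -> is_fiber Rel W ->
  M \in adj_space Z W -> rel_of (vtx i, vtx j) \notin rels_between Rel Z W -> M i j = 0.
Proof.
move=> fibZ fibW /andP [_ /eqP <-]; rewrite rel_of_rels_between // idmx_on_mulmx_entry.
by move/negbTE ->; rewrite mul0r.
Qed.

Lemma card_adj_space Z W : is_fiber Rel Z -> is_fiber Rel W ->
  #|adj_space Z W| = (#|F| ^ #|rels_between Rel Z W|)%N.
Proof.
move=> fibZ fibW; set D := rels_between Rel Z W.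
have onDP (f : {ffun {set V * V} -> F}) :
    reflect {in [predC D], forall S, f S = 0} (f \in pffun_on 0 D [set: F]).
  apply: (iffP pffun_onP) => [[/subsetP suppD _] S | f0].
    by rewrite inE => notDS; apply/eqP; apply: contraNT notDS => /suppD; rewrite inE.
  split=> [|y _]; last by rewrite inE.
  by apply/subsetP => S; rewrite inE; apply: contraR => notDS; rewrite f0.
pose mx_of (f : {ffun {set V * V} -> F}) : 'M[F]_n :=
  \matrix_(i, j) f (rel_of (vtx i, vtx j)).
have mx_ofK : {in pffun_on 0 D [set: F] &, injective mx_of}.
  move=> f g /onDP f0 /onDP g0 eq_fg; apply/ffunP => S.
  have [DS | notDS] := boolP (S \in D); last by rewrite f0 ?g0.
  have RelS : S \in Rel by case/setIdP: DS.
  have [[a b] Sab] := rel_neq0 RelS.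
  have := congr1 (fun M : 'M[F]_n => M (enum_rank a) (enum_rank b)) eq_fg.
  by rewrite /= !mxE !vtx_rank (rel_ofE RelS Sab).
rewrite -[#|F|]cardsT -(card_pffun_on 0) -(card_in_imset mx_ofK).
apply: eq_card => M; apply/idP/imsetP => [MZW | [f /onDP f0 ->]].
  have /andP [/rel_constantP M_eq _] := MZW.
  exists [ffun S => if S \in D then
                     if [pick z in S] is Some z then M (enum_rank z.1) (enum_rank z.2) else 0
                   else 0].
    by apply/onDP => S; rewrite inE ffunE => /negbTE ->.
  apply/matrixP => i j; rewrite !mxE ffunE.
  have [DS | notDS] := boolP (rel_of (vtx i, vtx j) \in D); last first.
    exact: adj_space_entry_eq0 MZW notDS.
  case: pickP => [[a b] Sab | /(_ (vtx i, vtx j))]; last by rewrite mem_rel_of.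
  by apply: M_eq; rewrite /= !vtx_rank (rel_ofE (rel_of_rel _) Sab).
rewrite adj_spaceE; apply/andP; split.
  by apply/rel_constantP => i j k l eq_rel; rewrite !mxE eq_rel.
apply/eqP/matrixP => i j; rewrite idmx_on_mulmx_entry mxE -rel_of_rels_between //.
by case: (boolP (_ \in D)) => [_ | notDS]; rewrite ?mul1r // f0 ?mulr0.
Qed.

Lemma adj_space_nilpotent Z b : is_fiber Rel Z -> #|Z| \in [pchar F] ->
  b \in adj_space Z Z -> b *m ones = 0 -> exists m, b ^+ m = 0.
Proof.
move=> fibZ charZ bZ b_ones.
have [m m_gt0 idem_bm] := @expr_idempotent _ b (enum 'M[F]_n) (fun k => mem_enum _ _).
exists m; apply: (adj_space_idem_eq0 fibZ charZ) => //; rewrite -(prednK m_gt0).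
  exact: adj_space_exp.
by rewrite exprSr -mulmxE -mulmxA b_ones mulmx0.
Qed.

Lemma adjmx_gram X Y R k k' : is_fiber Rel X -> #|X| \in [pchar F] ->
  R \in rels_between Rel X Y -> {in X, forall x, #|nbhd R x| = k} ->
  {in Y, forall y, #|nbhd (transpose R) y| = k'} ->
  exists2 b, adjmx R *m (adjmx R)^T = (k * k')%:R *: idmx_on X + b & exists m, b ^+ m = 0.
Proof.
move=> fibX charX RXY valR valRt; set N := adjmx R.
exists (N *m N^T - (k * k')%:R *: idmx_on X); first by rewrite addrC subrK.
have NXY : N \in adj_space X Y := adjmx_adj_space F RXY.
apply: (adj_space_nilpotent fibX charX).
  by rewrite rpredB ?rpredZ ?idmx_on_adj_space ?(adj_spaceM NXY) ?adj_spaceT.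
rewrite mulmxBl -mulmxA trmx_adjmx.
rewrite (adjmx_ones_valency F (transpose_rels_between RXY) valRt) -scalemxAr mulmxA.
rewrite (adj_space_idr NXY) (adjmx_ones_valency F RXY valR) -scalemxAl scalerA.
by rewrite -natrM mulnC subrr.
Qed.

Lemma card_adj_space_le X Y R R' : is_fiber Rel X -> is_fiber Rel Y ->
  #|X| = #|Y| -> #|X| \in [pchar F] ->
  R \in rels_between Rel X Y -> R' \in rels_between Rel X Y -> R != R' ->
  (#|adj_space X X| <= #|adj_space X Y| <= #|adj_space Y Y|)%N.
Proof.
move=> fibX fibY eqXY charX RXY R'XY neqRR'.
have [k [valR /andP [k_gt0 k_lt]]] := valency_bounds fibX RXY R'XY neqRR'.
have neqRR'T : transpose R != transpose R' by rewrite (inj_eq (@transpose_inj V)).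
have [k' [valRt /andP [k'_gt0 k'_lt]]] := valency_bounds fibY
  (transpose_rels_between RXY) (transpose_rels_between R'XY) neqRR'T.
have kk'_neq0 : (k * k')%:R != 0 :> F.
  by rewrite natrM mulf_neq0 // -(dvdn_pcharf charX) gtnNdvd // eqXY.
have [b gram [m bm0]] := adjmx_gram fibX charX RXY valR valRt.
have NXY : adjmx R \in adj_space X Y := adjmx_adj_space F RXY.
apply/andP; split.
  apply: (@leq_card_in_map _ _ _ _ (mulmx^~ (adjmx R))) => [a aXX | a a' aXX a'XX /= eq_aN].
    exact: adj_spaceM NXY.
  apply/eqP; rewrite -subr_eq0; apply/eqP.
  apply: (scale_add_nilpotent_eq0l kk'_neq0 bm0 (adj_space_idr (rpredB aXX a'XX))).
  by rewrite -gram mulmxA mulmxBl eq_aN subrr mul0mx.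
apply: (@leq_card_in_map _ _ _ _ (mulmx (adjmx R)^T)) => [a aXY | a a' aXY a'XY /= eq_Na].
  exact: adj_spaceM (adj_spaceT NXY) aXY.
apply/eqP; rewrite -subr_eq0; apply/eqP.
apply: (scale_add_nilpotent_eq0r kk'_neq0 bm0 (adj_space_idl (rpredB aXY a'XY))).
by rewrite -gram -mulmxA mulmxBr eq_Na subrr mulmx0.
Qed.

Lemma card_rels_between_le X Y R R' : is_fiber Rel X -> is_fiber Rel Y ->
  #|X| = #|Y| -> #|X| \in [pchar F] ->
  R \in rels_between Rel X Y -> R' \in rels_between Rel X Y -> R != R' ->
  (#|rels_between Rel X X| <= #|rels_between Rel X Y| <= #|rels_between Rel Y Y|)%N.
Proof.
move=> fibX fibY eqXY charX RXY R'XY neqRR'.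
have := card_adj_space_le fibX fibY eqXY charX RXY R'XY neqRR'.
by rewrite !card_adj_space // !leq_exp2l ?card_finNzRing_gt1.
Qed.

End FiniteField.
End CoherentConfiguration.

Local Close Scope ring_scope.

Theorem corollary2p5 (V : finType) (Rel : {set {set V * V}}) (X Y : {set V}) :
  coherent_configuration Rel ->
  is_fiber Rel X -> is_fiber Rel Y ->
  #|X| = #|Y| -> prime #|X| ->
  (#|rels_between Rel X Y| = 1 \/
   #|rels_between Rel X Y| = #|rels_between Rel X X|) /\
  (1 < #|rels_between Rel X Y| ->
   #|rels_between Rel X Y| = #|rels_between Rel X X| /\
   #|rels_between Rel X X| = #|rels_between Rel Y Y|).
Proof.
move=> ccRel fibX fibY eqXY primeX.
have charX := pchar_Fp primeX; have charY := charX; rewrite eqXY in charY.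
have [x Xx] : exists x, x \in X by apply/set0Pn; rewrite -card_gt0 prime_gt0.
have [y Yy] : exists y, y \in Y by apply/set0Pn; rewrite -card_gt0 -eqXY prime_gt0.
have RXY_gt0 : (0 < #|rels_between Rel X Y|)%N.
  by apply/card_gt0P; exists (rel_of Rel (x, y)); rewrite rel_of_rels_between // Xx Yy.
suff card_eq : (1 < #|rels_between Rel X Y|)%N ->
    #|rels_between Rel X Y| = #|rels_between Rel X X| /\
    #|rels_between Rel X X| = #|rels_between Rel Y Y|.
  split=> //; case: (ltngtP #|rels_between Rel X Y| 1) => [lt1 | /card_eq [-> _] | ->].
  - by move: RXY_gt0; rewrite lt0n -leqn0 -ltnS lt1.
  - by right.
  - by left.
case/card_gt1P => R [R' [RXY R'XY neqRR']].
have neqRR'T : transpose R != transpose R' by rewrite (inj_eq (@transpose_inj V)).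
have := card_rels_between_le ccRel fibX fibY eqXY charX RXY R'XY neqRR'.
have := card_rels_between_le ccRel fibY fibX (esym eqXY) charY
  (transpose_rels_between ccRel RXY) (transpose_rels_between ccRel R'XY) neqRR'T.
move=> /andP [le_YY_YX le_YX_XX] /andP [le_XX_XY le_XY_YY].
have le_YY_XX := leq_trans le_YY_YX le_YX_XX.
by split; apply/eqP; rewrite eqn_leq ?(leq_trans le_XY_YY) ?(leq_trans le_XX_XY).
Qed.
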